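(* Assume $B$ is connected. Let $\varphi\colon A\to B$ be a $\mathbb{K}$-linear map and suppose there is $N\in\mathbb{N}$ such that for every $a\in A$ the series $R_\varphi(a,z)$ is a polynomial in $z$ of degree at most $N$ (i.e. $\psi_k(a)=0$ for all $k>N$ and all $a$). Then $\varphi(1)=n\cdot 1_B$ for some integer $n$ with $0\le n\le N$; for every $a\in A$ the polynomial $R_\varphi(a,z)$ has degree at most $n$; and $R_\varphi(1,z)=(1+z)^n$, so the degree is exactly $n$ for $a=1$. Moreover, for every $a\in A$, $R_\varphi(a,z)=z^n\bigl(1+\sum_{k=1}^{n}\psi_k(z^{-1}\cdot 1+a-1)\bigr)$ as polynomials/Laurent polynomials in $z$.
   Context: $\mathbb{K}=\mathbb{R}$ or $\mathbb{C}$; $A$ and $B$ are commutative associative unital $\mathbb{K}$-algebras. For a $\mathbb{K}$-linear map $\varphi\colon A\to B$ and $a\in A$, the characteristic function is $R_\varphi(a,z)=\exp\bigl(\varphi(\ln(1+az))\bigr)\in B[[z]]$, with $\ln(1+az)=\sum_{k\ge1}(-1)^{k+1}a^kz^k/k$, $\varphi$ applied coefficientwise; write $R_\varphi(a,z)=1+\sum_{k\ge1}\psi_k(a)z^k$. Each $\psi_k(a)$ is a universal polynomial in $\varphi(a),\varphi(a^2),\dots,\varphi(a^k)$, homogeneous of degree $k$ in $a$. The algebra $B$ is called connected if for every $b\in B$ and every $k\ge0$, $b(b-1)(b-2)\cdots(b-k)=0$ implies $b=j\cdot 1_B$ for some $j\in\{0,1,\dots,k\}$ (e.g. any $B$ without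 zero divisors). *)

From HB Require Import structures.
From mathcomp Require Import all_boot all_order all_algebra.
Set Implicit Arguments. Unset Strict Implicit. Unset Printing Implicit Defensive.
Import Order.TTheory GRing.Theory Num.Theory.
Local Open Scope ring_scope.

Section Char.
Variables (K : numFieldType) (S : comNzRingType) (sc : K -> S).

(* Truncation (up to degree k) of the power series
   sum_{i>=1} (-1)^(i+1)/i * p i * z^i, where p i stands for phi(b^i);
   phi((-1)^(i+1)/i * b^i) = ((-1)^(i+1)/i) * phi(b^i) by K-linearity,
   scalars c of K acting on S through sc. *)
Definition lnser (p : nat -> S) (k : nat) : {poly S} :=
  \sum_(1 <= i < k.+1) (sc ((-1) ^+ i.+1 / i%:R) * p i)%:P * 'X^i.

Definition expser (f : {poly S}) (k : nat) : {poly S} :=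
  \sum_(m < k.+1) (sc (m`!%:R)^-1)%:P * f ^+ m.

Definition psiU (p : nat -> S) (k : nat) : S := (expser (lnser p k) k)`_k.
End Char.

(* psi_k(a) = coefficient of z^k in R_phi(a,z) = exp(phi(ln(1+az))). *)
Definition psi (K : numFieldType) (A B : comAlgType K) (phi : A -> B)
    (a : A) (k : nat) : B :=
  psiU (fun c : K => c%:A) (fun i => phi (a ^+ i)) k.

(* psi_k evaluated at the formal element  w*1 + c  (w = z^{-1} an indeterminate),
   phi being extended coefficientwise to A[w] -> B[w]; result in B[w]. *)
Definition psiW (K : numFieldType) (A B : comAlgType K) (phi : A -> B)
    (c : A) (k : nat) : {poly B} :=
  psiU (fun x : K => (x%:A)%:P) (fun i => map_poly phi (('X + c%:P) ^+ i)) k.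

Definition connected_alg (K : numFieldType) (B : comAlgType K) : Prop :=
  forall (b : B) (k : nat), \prod_(j < k.+1) (b - j%:R) = 0 ->
    exists j : nat, (j <= k)%N /\ b = j%:R.

(* A derivation applied to this truncated exponential gives, for z d/dz, Newton's identities,
   and for d/dt after substituting a + t for a, the shift identity
     R(a + t, z) = sum_k psi_k(a) z^k (1 + t z)^(phi(1) - k),
   because both sides satisfy the same first-order recursion in t.  At a = 0 it gives
   psi_k(1) = binom(phi(1), k); so psi_(N+1)(1) = 0 kills phi(1)(phi(1) - 1)...(phi(1) - N),
   and connectedness makes phi(1) a natural number n <= N.  A Vandermonde argument on the
   shift identity then lowers the degree bound from N to n, and summing the identity with
   t = w and a - 1 in place of a produces w^n R(a, 1/w). *)

From HB Require Import structures.
From mathcomp Require Import all_boot all_order all_algebra zify.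
Import GRing.Theory Num.Theory.
Local Open Scope ring_scope.
Set Implicit Arguments. Unset Strict Implicit.

Section Truncation.
Variable S : nzRingType.

Definition vanishes_below (k : nat) (P : {poly S}) := forall i, (i < k)%N -> P`_i = 0.
Definition agrees_below (k : nat) (P Q : {poly S}) := forall i, (i < k)%N -> P`_i = Q`_i.

Lemma vanishes_belowM k l P Q :
  vanishes_below k P -> vanishes_below l Q -> vanishes_below (k + l) (P * Q).
Proof.
move=> hP hQ i hi; rewrite coefM big1 // => j _.
have [hj|hj] := ltnP j k; first by rewrite hP // mul0r.
by rewrite hQ ?mulr0 //; have := ltn_ord j; lia.
Qed.

Lemma vanishes_belowX f j : vanishes_below 1 f -> vanishes_below j (f ^+ j).
Proof.
move=> hf; elim: j => [|j IH]; first by [].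
by rewrite exprS -add1n; apply: vanishes_belowM.
Qed.

Lemma agrees_belowM k P P' Q Q' :
  agrees_below k P P' -> agrees_below k Q Q' -> agrees_below k (P * Q) (P' * Q').
Proof.
move=> hP hQ i hi; rewrite !coefM; apply: eq_bigr => j _.
have hj := ltn_ord j; rewrite hP ?hQ //; lia.
Qed.

Lemma agrees_belowX k P P' j :
  agrees_below k P P' -> agrees_below k (P ^+ j) (P' ^+ j).
Proof.
move=> h; elim: j => [|j IH]; first by [].
by rewrite !exprS; apply: agrees_belowM.
Qed.

End Truncation.

Section UniversalPolynomials.
Variables (K : numFieldType) (S : comNzRingType) (sc : {rmorphism K -> S}).

Lemma mulrSn_inj k : injective (fun x : S => x *+ k.+1).
Proof.
have scK : sc k.+1%:R^-1 * k.+1%:R = 1.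
  by rewrite -(rmorph_nat sc) -rmorphM mulVf ?rmorph1 // pnatr_eq0.
move=> x y /= /(congr1 (fun z => sc k.+1%:R^-1 * z)).
by rewrite -[x *+ _]mulr_natl -[y *+ _]mulr_natl !mulrA scK !mul1r.
Qed.

Lemma coef_lnser p m i :
  (lnser sc p m)`_i = if (0 < i <= m)%N then sc ((-1) ^+ i.+1 / i%:R) * p i else 0.
Proof.
rewrite /lnser (eq_bigr _ (fun j _ => mul_polyC _ _)) coef_sumMXn /=.
by rewrite big_nat1_eq ltnS.
Qed.

Lemma lnser_vanishes0 p m : vanishes_below 1 (lnser sc p m).
Proof. by case=> // _; rewrite coef_lnser. Qed.

Lemma lnser_agrees p m j : (j <= m)%N -> agrees_below j.+1 (lnser sc p m) (lnser sc p j).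
Proof.
move=> hjm i; rewrite !coef_lnser; case: i => [|i] //=; rewrite ltnS => hi.
by rewrite hi (leq_trans hi hjm).
Qed.

Lemma expser_agrees k f g m :
  agrees_below k f g -> agrees_below k (expser sc f m) (expser sc g m).
Proof.
move=> h i hi; rewrite /expser !coef_sum; apply: eq_bigr => l _.
by rewrite !coefCM (agrees_belowX l h).
Qed.

Lemma expser_trunc f j d :
  vanishes_below 1 f -> agrees_below j.+1 (expser sc f (j + d)) (expser sc f j).
Proof.
move=> hf; elim: d => [|d IH]; first by rewrite addn0.
rewrite addnS /expser big_ord_recr /= => i hi.
rewrite coefD -IH // coefCM (vanishes_belowX hf) ?mulr0 ?addr0 //; lia.
Qed.

Lemma psiU_coef p j m : (j <= m)%N -> psiU sc p j = (expser sc (lnser sc p m) m)`_j.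
Proof.
move=> /subnKC <-; rewrite /psiU (expser_trunc _ (lnser_vanishes0 p _)) //.
by rewrite (expser_agrees _ (lnser_agrees p (leq_addr _ j))).
Qed.

Lemma psiU0 p : psiU sc p 0 = 1.
Proof. by rewrite /psiU /expser big_ord1 expr0 mulr1 coefC fact0 invr1 rmorph1. Qed.

Lemma sc_divnatK x k : sc (x / k.+1%:R) *+ k.+1 = sc x.
Proof. by rewrite -mulr_natr -(rmorph_nat sc) -rmorphM divfK ?pnatr_eq0. Qed.

Lemma sc_invfactS k : sc (k.+1)`!%:R^-1 *+ k.+1 = sc k`!%:R^-1.
Proof. by rewrite factS natrM invfM mulrC sc_divnatK. Qed.

Section Derivation.
Variable D : {poly S} -> {poly S}.
Hypothesis DD : forall P Q, D (P + Q) = D P + D Q.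
Hypothesis DM : forall P Q, D (P * Q) = D P * Q + P * D Q.
Hypothesis DC : forall x, D (sc x)%:P = 0.
Hypothesis D_vanishes0 : forall P, vanishes_below 1 P -> vanishes_below 1 (D P).

Lemma derivation_sum n (F : 'I_n -> {poly S}) :
  D (\sum_(l < n) F l) = \sum_(l < n) D (F l).
Proof.
elim: n F => [|n IH] F; last by rewrite !big_ord_recr /= DD IH.
by rewrite !big_ord0 -polyC0 -(rmorph0 sc) DC rmorph0 polyC0.
Qed.

Lemma derivationX f j : D (f ^+ j.+1) = D f * f ^+ j *+ j.+1.
Proof.
elim: j => [|j IH]; first by rewrite expr1 expr0 mulr1.
by rewrite exprS DM IH mulrnAr mulrCA -exprS -mulrS.
Qed.

Lemma derivation_expserS f m : D (expser sc f m.+1) = D f * expser sc f m.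
Proof.
rewrite /expser big_ord_recl /= expr0 mulr1 DD DC add0r derivation_sum mulr_sumr.
apply: eq_bigr => l _; rewrite DM DC mul0r add0r derivationX /= /bump /= add1n.
by rewrite mulrnAr -mulrnAl mulrCA -polyCMn sc_invfactS.
Qed.

Lemma derivation_expser f m : vanishes_below 1 f ->
  agrees_below m.+1 (D (expser sc f m)) (D f * expser sc f m).
Proof.
move=> hf; case: m => [|m] i hi.
  rewrite (_ : i = 0%N); last by lia.
  rewrite /expser big_ord1 expr0 mulr1 DC coef0.
  by rewrite (vanishes_belowM (l:=0) (D_vanishes0 hf)) // => -[].
rewrite derivation_expserS {2}/expser big_ord_recr /= mulrDr coefD -/(expser sc f m).
by rewrite mulrCA coefCM (vanishes_belowM (D_vanishes0 hf) (vanishes_belowX hf)) ?mulr0 ?addr0.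
Qed.

End Derivation.

Lemma psiU_newton p k :
  psiU sc p k *+ k = \sum_(i < k) (-1) ^+ i * p i.+1 * psiU sc p (k - i.+1).
Proof.
case: k => [|k]; first by rewrite mulr0n big_ord0.
pose D P : {poly S} := 'X * P^`().
have DD P Q : D (P + Q) = D P + D Q by rewrite /D derivD mulrDr.
have DM P Q : D (P * Q) = D P * Q + P * D Q by rewrite /D derivM mulrDr mulrA mulrCA.
have DC x : D (sc x)%:P = 0 by rewrite /D derivC mulr0.
have D_vanishes0 P : vanishes_below 1 P -> vanishes_below 1 (D P).
  by move=> _ [] // _; rewrite /D coefXM.
have := derivation_expser DD DM DC D_vanishes0 (lnser_vanishes0 p k.+1) (ltnSn k.+1).
rewrite coefXM coef_deriv /= => ->.
rewrite coefM big_ord_recl coefXM mul0r add0r; apply: eq_bigr => j _.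
rewrite /= /bump /= add1n coefXM coef_deriv coef_lnser /= ltn_ord -mulrnAl sc_divnatK.
rewrite subSS -psiU_coef; last exact: leq_trans (leq_subr j k) (leqnSn k).
by rewrite rmorphXn rmorphN1 !exprS !mulN1r opprK.
Qed.

Lemma eq_poly_deriv (P Q : {poly S}) : P^`() = Q^`() -> P`_0 = Q`_0 -> P = Q.
Proof.
move=> hd h0; apply/polyP => -[|i] //; apply: (mulrSn_inj (k := i)).
by rewrite /= -!coef_deriv hd.
Qed.

End UniversalPolynomials.

Lemma eq_psiU (K : numFieldType) (S : comNzRingType) (sc1 sc2 : K -> S)
    (p1 p2 : nat -> S) k :
  sc1 =1 sc2 -> {in [pred i | 0 < i]%N, p1 =1 p2} -> psiU sc1 p1 k = psiU sc2 p2 k.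
Proof.
move=> h1 h2; rewrite /psiU.
have -> : lnser sc1 p1 k = lnser sc2 p2 k.
  by apply: eq_big_nat => i /andP [hi _]; rewrite h1 h2.
congr (_ `_ k); rewrite /expser; under eq_bigr do rewrite h1; done.
Qed.

Lemma rmorph_psiU (K : numFieldType) (S S' : comNzRingType) (sc : {rmorphism K -> S})
    (f : {rmorphism S -> S'}) p k :
  f (psiU sc p k) = psiU (f \o sc) (f \o p) k.
Proof.
have f_lnser : map_poly f (lnser sc p k) = lnser (f \o sc) (f \o p) k.
  rewrite rmorph_sum; apply: eq_bigr => i _.
  by rewrite rmorphM /= map_polyC map_polyXn; congr (_%:P * _); apply: rmorphM.
have f_expser F : map_poly f (expser sc F k) = expser (f \o sc) (map_poly f F) k.
  by rewrite rmorph_sum; apply: eq_bigr => l _; rewrite rmorphM /= map_polyC rmorphXn.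
by rewrite /psiU -coef_map f_expser f_lnser.
Qed.

Section GeneralizedBinomial.
Variables (K : numFieldType) (S : comNzRingType) (sc : {rmorphism K -> S}).

Definition gbinom (x : S) (s : nat) : S := sc s`!%:R^-1 * \prod_(i < s) (x - i%:R).

Lemma gbinom0 x : gbinom x 0 = 1.
Proof. by rewrite /gbinom big_ord0 mulr1 fact0 invr1 rmorph1. Qed.

Lemma gbinomS x s : gbinom x s.+1 *+ s.+1 = gbinom x s * (x - s%:R).
Proof. by rewrite /gbinom big_ord_recr /= -mulrnAl sc_invfactS mulrA. Qed.

Lemma gbinom_addr1 x s : gbinom (x + 1) s.+1 = gbinom x s.+1 + gbinom x s.
Proof.
rewrite /gbinom big_ord_recl big_ord_recr /= subr0.
set G := \prod_(i < s) (x - i%:R).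
have -> : \prod_(i < s) (x + 1 - (bump 0 i)%:R) = G.
  by apply: eq_bigr => i _; rewrite /bump /= add1n -natr1 opprD addrACA subrr addr0.
rewrite -(sc_invfactS sc s) mulrnAl -mulrnAr -mulrDr; congr (_ * _).
by rewrite -[G *+ _]mulr_natr -mulrDr mulrC -natr1 addrA subrK.
Qed.

Lemma prod_natrB n s : \prod_(i < s) (n%:R - i%:R : S) = (n ^_ s)%:R.
Proof.
elim: s => [|s IH]; first by rewrite big_ord0 ffactn0.
rewrite big_ord_recr /= IH ffactnSr natrM.
by have [hs|hs] := leqP s n; [rewrite natrB | rewrite ffact_small // !mul0r].
Qed.

Lemma gbinom_nat n s : gbinom n%:R s = 'C(n, s)%:R.
Proof.
rewrite /gbinom prod_natrB -bin_ffact natrM mulrCA -[s`!%:R : S](rmorph_nat sc) -rmorphM.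
by rewrite mulVf ?rmorph1 ?mulr1 // pnatr_eq0 -lt0n fact_gt0.
Qed.

Lemma gbinom_vandermonde r s x : (r <= s)%N ->
  \sum_(j < r.+1) 'C(r, j)%:R * gbinom x (s - j) = gbinom (x + r%:R) s.
Proof.
elim: r s => [|r IH] s hrs; first by rewrite big_ord1 subn0 addr0 mul1r.
case: s hrs => [|s] // hrs.
rewrite big_ord_recl /= bin0 mul1r subn0.
under eq_bigr => j _ do rewrite /bump /= add1n binS natrD mulrDl subSS.
rewrite big_split /= IH // addrA -natr1 addrA gbinom_addr1 -(IH s.+1) ?(ltnW hrs) //.
congr (_ + _); rewrite big_ord_recr /= bin_small // mul0r addr0.
by rewrite [RHS]big_ord_recl /= bin0 mul1r subn0.
Qed.

End GeneralizedBinomial.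

Lemma gbinom_rmorph (K : numFieldType) (S S' : comNzRingType) (sc : {rmorphism K -> S})
    (f : {rmorphism S -> S'}) x s :
  f (gbinom sc x s) = gbinom (f \o sc) (f x) s.
Proof.
rewrite /gbinom rmorphM rmorph_prod /=; congr (_ * _); apply: eq_bigr => i _.
by rewrite rmorphB rmorph_nat.
Qed.

Lemma deriv_CXnS (S : nzRingType) (c : S) e :
  (c%:P * 'X^(e.+1))^`() = (c *+ e.+1)%:P * 'X^e.
Proof. by rewrite deriv_mulC derivXn /= mulrnAr -mulrnAl -polyCMn. Qed.

Section Shift.
Variables (K : numFieldType) (S : comNzRingType) (sc : {rmorphism K -> S}).
Variables (b : S) (p : nat -> S).

Local Definition scP : {rmorphism K -> {poly S}} := polyC \o sc.

(* With b = phi(1) and p j = phi(a^j), tmoment i is phi((a + t)^i) as a polynomial in t. *)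
Definition moment (j : nat) : S := if j == 0%N then b else p j.

Definition tmoment (i : nat) : {poly S} :=
  \sum_(j < i.+1) ('C(i, j)%:R * moment j)%:P * 'X^(i - j).

Lemma tmoment0 : tmoment 0 = b%:P.
Proof. by rewrite /tmoment big_ord1 /= mul1r expr0 mulr1. Qed.

Lemma deriv_tmoment i : (tmoment i.+1)^`() = tmoment i *+ i.+1.
Proof.
rewrite /tmoment raddf_sum big_ord_recr /= subnn deriv_mulC derivXn mulr0n mulr0 addr0.
rewrite -sumrMnl; apply: eq_bigr => j _.
have hj : (j <= i)%N by rewrite -ltnS.
rewrite /= subSn // deriv_CXnS -[RHS]mulrnAl -polyCMn; congr (_%:P * _).
rewrite -!mulrnAl -!mulrnA; congr (_%:R * _).
by have := mul_bin_down i.+1 j; rewrite /= subSn // => h; rewrite mulnC -h mulnC.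
Qed.

Lemma tmoment_at0 i : (0 < i)%N -> (tmoment i).[0] = p i.
Proof.
case: i => // i _.
rewrite /tmoment horner_sum big_ord_recr /= subnn expr0 mulr1 hornerC binn mul1r.
rewrite big1 ?add0r // => j _.
by rewrite hornerCM hornerXn expr0n subn_eq0 leqNgt ltn_ord mulr0.
Qed.

Lemma deriv_psiU_tmoment m :
  (psiU scP tmoment m.+1)^`() =
  \sum_(j < m.+1) (-1) ^+ j * tmoment j * psiU scP tmoment (m - j).
Proof.
pose D (P : {poly {poly S}}) := map_poly (fun x : {poly S} => x^`()) P.
have coef_D P i : (D P)`_i = (P`_i)^`() by rewrite coef_map_id0 ?deriv0.
have DD P Q : D (P + Q) = D P + D Q.
  by apply/polyP => i; rewrite coef_D !coefD derivD !coef_D.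
have DM P Q : D (P * Q) = D P * Q + P * D Q.
  apply/polyP => i; rewrite coef_D coefD !coefM raddf_sum -big_split.
  by apply: eq_bigr => j _; rewrite /= derivM !coef_D.
have DC x : D (scP x)%:P = 0.
  by apply/polyP => i; rewrite coef_D !coefC; case: eqP; rewrite ?derivC.
have D_vanishes0 P : vanishes_below 1 P -> vanishes_below 1 (D P).
  by move=> hP [|i] // _; rewrite coef_D hP ?deriv0.
have := derivation_expser DD DM DC D_vanishes0
  (lnser_vanishes0 scP tmoment m.+1) (ltnSn m.+1).
rewrite coef_D => ->; rewrite coefM big_ord_recl coef_D coef_lnser /= deriv0 mul0r add0r.
apply: eq_bigr => j _; rewrite coef_D coef_lnser /= /bump /= add1n ltn_ord subSS.
rewrite deriv_mulC deriv_tmoment mulrnAr -mulrnAl /= -polyCMn sc_divnatK.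
rewrite -psiU_coef; last exact: leq_trans (leq_subr j m) (leqnSn m).
by rewrite rmorphXn rmorphN1 !exprS !mulN1r opprK polyC_exp polyCN polyC1.
Qed.

Lemma psiU_tmoment_ode m :
  (psiU scP tmoment m.+1)^`() = psiU scP tmoment m * (b%:P - m%:R).
Proof.
rewrite deriv_psiU_tmoment big_ord_recl /= tmoment0 subn0 mulrBr.
have newton_m := psiU_newton scP tmoment m.
under eq_bigr => j _ do rewrite /bump /= add1n exprS mulN1r !mulNr.
by rewrite expr0 mul1r sumrN -newton_m mulr_natr mulrC.
Qed.

Definition shift_poly (m : nat) : {poly S} :=
  \sum_(k < m.+1) (psiU sc p k * gbinom sc (b - k%:R) (m - k))%:P * 'X^(m - k).

Lemma shift_poly_ode m : (shift_poly m.+1)^`() = shift_poly m * (b%:P - m%:R).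
Proof.
rewrite /shift_poly raddf_sum big_ord_recr /= subnn deriv_mulC derivXn mulr0n mulr0 addr0.
rewrite mulr_suml; apply: eq_bigr => k _.
have hk : (k <= m)%N by rewrite -ltnS.
rewrite /= subSn // deriv_CXnS -mulrnAr gbinomS.
rewrite (natrB _ hk) opprB addrA subrK [RHS]mulrAC -polyC_natr -polyCB -polyCM.
by rewrite mulrA.
Qed.

Lemma horner_psiU (P : nat -> {poly S}) t m :
  (psiU scP P m).[t] = psiU sc (fun i => (P i).[t]) m.
Proof.
rewrite -horner_evalE rmorph_psiU.
by apply: eq_psiU => [x|i _] /=; rewrite horner_evalE ?hornerC.
Qed.

(* Both sides satisfy F_(m+1)' = (b - m) F_m and agree at t = 0. *)
Lemma psiU_tmoment m : psiU scP tmoment m = shift_poly m.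
Proof.
elim: m => [|m IH].
  by rewrite /shift_poly big_ord1 (psiU0 scP) psiU0 gbinom0 subnn mulr1 expr0 mulr1 polyC1.
apply: (eq_poly_deriv sc); first by rewrite psiU_tmoment_ode IH shift_poly_ode.
rewrite -horner_coef0 horner_psiU (eq_psiU (sc2 := sc) (p2 := p)) //; last first.
  by move=> i; rewrite inE => /tmoment_at0.
rewrite /shift_poly coef_sum big_ord_recr /= subnn expr0 mulr1 coefC gbinom0 mulr1.
rewrite big1 ?add0r // => k _.
by rewrite coefCM coefXn eq_sym subn_eq0 leqNgt ltn_ord mulr0.
Qed.

Lemma psiU_shift t m :
  psiU sc (fun i => \sum_(j < i.+1) 'C(i, j)%:R * t ^+ (i - j) * moment j) m =
  \sum_(k < m.+1) psiU sc p k * gbinom sc (b - k%:R) (m - k) * t ^+ (m - k).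
Proof.
transitivity (psiU sc (fun i => (tmoment i).[t]) m).
  apply: eq_psiU => // i _; rewrite /tmoment horner_sum; apply: eq_bigr => j _.
  by rewrite hornerCM hornerXn mulrAC.
rewrite -horner_psiU psiU_tmoment /shift_poly horner_sum; apply: eq_bigr => k _.
by rewrite hornerCM hornerXn.
Qed.

End Shift.

Lemma sumr_ord_trunc (R : nmodType) M L (F : nat -> R) : (M <= L)%N ->
  (forall k, (M < k)%N -> F k = 0) -> \sum_(k < L.+1) F k = \sum_(k < M.+1) F k.
Proof.
move=> hML hF; rewrite -!(big_mkord xpredT) (big_cat_nat _ (n := M.+1)) ?ltnS //=.
rewrite [X in _ + X]big1_seq ?addr0 // => k /andP [_].
by rewrite mem_index_iota => /andP [hk _]; apply: hF.
Qed.

Lemma coef_sum_revXn (R : nzRingType) m (c : nat -> R) j :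
  (\sum_(k < m.+1) (c k)%:P * 'X^(m - k))`_j = if (j <= m)%N then c (m - j)%N else 0.
Proof.
rewrite (reindex_inj rev_ord_inj) /=.
under eq_bigr => k _ do rewrite subSS subKn ?leq_ord // mul_polyC.
by rewrite coef_sumMXn /= (big_ord1_eq _ (fun i => c (m - i)%N) j m.+1) ltnS.
Qed.

Section CharacteristicFunction.
Variables (K : numFieldType) (A B : comAlgType K) (phi : {linear A -> B}).

Local Notation sc := (in_alg B).

Lemma psiE a k : psi phi a k = psiU sc (fun i => phi (a ^+ i)) k.
Proof. exact: eq_psiU. Qed.

Lemma psi_addr1 a m :
  psi phi (a + 1) m = \sum_(k < m.+1) psi phi a k * gbinom sc (phi 1 - k%:R) (m - k).
Proof.
transitivity (\sum_(k < m.+1) psiU sc (fun i => phi (a ^+ i)) k *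
    gbinom sc (phi 1 - k%:R) (m - k) * 1 ^+ (m - k)); last first.
  by apply: eq_bigr => k _; rewrite expr1n mulr1 psiE.
rewrite -psiU_shift psiE; apply: eq_psiU => // i _.
rewrite exprD1n raddf_sum; apply: eq_bigr => j _.
rewrite raddfMn expr1n mulr1 mulr_natl /moment.
by case: eqP => // ->; rewrite expr0.
Qed.

Lemma psi0 k : (0 < k)%N -> psi phi 0 k = 0.
Proof.
case: k => // k _; rewrite psiE; apply: (@mulrSn_inj _ _ sc k); rewrite /= mul0rn psiU_newton.
by rewrite big1 // => i _; rewrite expr0n /= raddf0 mulr0 mul0r.
Qed.

Lemma psi1 m : psi phi 1 m = gbinom sc (phi 1) m.
Proof.
rewrite -[in LHS](add0r 1) psi_addr1 big_ord_recl /= big1 ?addr0; last first.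
  by move=> k _; rewrite psi0 ?mul0r.
by rewrite psiE psiU0 subr0 mul1r subn0.
Qed.

Lemma phi1_nat N : connected_alg B -> psi phi 1 N.+1 = 0 ->
  exists2 n, (n <= N)%N & phi 1 = n%:R.
Proof.
move=> connB; rewrite psi1 /gbinom => /(congr1 (fun x => sc N.+1`!%:R * x)).
rewrite mulr0 mulrA -rmorphM divff ?pnatr_eq0 -?lt0n ?fact_gt0 // rmorph1 mul1r.
by move=> /connB [n [hnN ->]]; exists n.
Qed.

Lemma map_poly_CXn (d : A) e : map_poly phi (d%:P * 'X^e) = (phi d)%:P * 'X^e.
Proof.
apply/polyP => l; rewrite coef_map_id0 ?raddf0 // !coefCM !coefXn.
by case: (l == e); rewrite ?mulr1 ?mulr0 ?raddf0.
Qed.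

Lemma psiWE c m : psiW phi c m =
  \sum_(k < m.+1) (psi phi c k * gbinom sc (phi 1 - k%:R) (m - k))%:P * 'X^(m - k).
Proof.
pose scP : {rmorphism K -> {poly B}} := polyC \o sc.
pose p i := (phi (c ^+ i))%:P.
transitivity (psiU scP (fun i => \sum_(j < i.+1) 'C(i, j)%:R * 'X ^+ (i - j) *
    moment (phi 1)%:P p j) m).
  apply: eq_psiU => // i _; rewrite exprDn raddf_sum; apply: eq_bigr => j _.
  rewrite raddfMn /= -polyC_exp mulrC map_poly_CXn mulr_natl mulrnAl mulrC /moment /p.
  by case: eqP => // ->; rewrite expr0.
rewrite psiU_shift; apply: eq_bigr => k _.
by rewrite polyCM psiE rmorph_psiU gbinom_rmorph rmorphB rmorph_nat.
Qed.

Lemma psiW0 c : psiW phi c 0 = 1.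
Proof.
rewrite /psiW (eq_psiU (sc2 := polyC \o sc)
  (p2 := fun i => map_poly phi (('X + c%:P) ^+ i))) //.
exact: psiU0.
Qed.

Section NaturalDegree.
Variable n : nat.
Hypothesis phi1 : phi 1 = n%:R.

(* With r = M - n > 0, psi_M(a) is the only nonzero term of
   sum_j C(r, j) psi_(M + r - j)(a); expanding each term by psi_addr1 at a - 1, the
   Vandermonde identity turns the coefficient of psi_k(a - 1) into C(M - k, M + r - k) = 0. *)
Lemma psi_degree_step M : (n < M)%N ->
  (forall a k, (M < k)%N -> psi phi a k = 0) -> forall a, psi phi a M = 0.
Proof.
move=> hnM hM a; set r := (M - n)%N; set c := a - 1.
have hMc k : (M < k)%N -> psi phi c k = 0 by apply: hM.
have -> : psi phi a M = \sum_(j < r.+1) 'C(r, j)%:R * psi phi (c + 1) (M + r - j).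
  rewrite subrK big_ord_recr /= binn mul1r addnK big1 ?add0r // => j _.
  by rewrite hM ?mulr0 //; have := ltn_ord j; lia.
have expand (j : 'I_r.+1) : psi phi (c + 1) (M + r - j) =
    \sum_(k < M.+1) psi phi c k * gbinom sc (phi 1 - k%:R) (M + r - j - k).
  rewrite psi_addr1 (sumr_ord_trunc (M := M)
    (F := fun k => psi phi c k * gbinom sc (phi 1 - k%:R) (M + r - j - k))) //.
  - by have := ltn_ord j; lia.
  - by move=> k /hMc ->; rewrite mul0r.
under eq_bigr => j _ do rewrite expand mulr_sumr.
rewrite exchange_big /= big1 // => k _.
under eq_bigr => j _ do rewrite mulrCA -subnAC.
have hk : (k <= M)%N by rewrite -ltnS.
rewrite -mulr_sumr gbinom_vandermonde; last by lia.
have -> : phi 1 - k%:R + r%:R = (M - k)%N%:R.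
  by rewrite phi1 /r (natrB _ (ltnW hnM)) (natrB _ hk) addrC addrA subrK.
by rewrite gbinom_nat bin_small ?mulr0 //; lia.
Qed.

Lemma psi_vanish_above M :
  (forall a k, (M < k)%N -> psi phi a k = 0) -> forall a k, (n < k)%N -> psi phi a k = 0.
Proof.
elim: M => [|M IH] hM; first by move=> a k hk; apply: hM; lia.
have [hnM|hMn] := ltnP n M.+1; last by move=> a k hk; apply: hM; lia.
apply: IH => a k; rewrite leq_eqVlt => /predU1P[<-|]; last exact: hM.
exact: psi_degree_step.
Qed.

Hypothesis psi_deg : forall a k, (n < k)%N -> psi phi a k = 0.

Lemma psiW_nat c m : psiW phi c m =
  \sum_(k < m.+1) (psi phi c k *+ 'C(n - k, m - k))%:P * 'X^(m - k).
Proof.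
rewrite psiWE; apply: eq_bigr => k _.
have [hk|hk] := leqP k n; first by rewrite phi1 -(natrB _ hk) gbinom_nat mulr_natr.
by rewrite psi_deg // mul0r mul0rn.
Qed.

Lemma coef_psiW c m j :
  (psiW phi c m)`_j = if (j <= m)%N then psi phi c (m - j) *+ 'C(n - (m - j), j) else 0.
Proof.
rewrite psiW_nat (coef_sum_revXn m (fun k => psi phi c k *+ 'C(n - k, m - k))).
by case: ifP => // /subKn ->.
Qed.

Lemma psiW_sum_coef a j :
  (1 + \sum_(1 <= k < n.+1) psiW phi (a - 1) k)`_j =
  if (j <= n)%N then psi phi a (n - j) else 0.
Proof.
set c := a - 1; rewrite -(psiW0 c) -big_ltn // coef_sum.
under eq_bigr => m _ do rewrite coef_psiW.
have [hjn|hnj] := leqP j n; last first.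
  rewrite big1_seq // => m /andP[_]; rewrite mem_index_iota /= => hm.
  by rewrite leqNgt (leq_trans hm hnj).
rewrite (big_cat_nat _ (n := j)) ?leqW //= big1_seq ?add0r; last first.
  by move=> m /andP[_]; rewrite mem_index_iota /= => hm; rewrite leqNgt hm.
rewrite -{1}[j]add0n big_addn subSn // big_mkord -[a](subrK 1) psi_addr1.
apply: eq_bigr => k _; have hk : (k <= n - j)%N by rewrite -ltnS.
rewrite leq_addl addnK phi1 -(natrB _ (leq_trans hk (leq_subr j n))) gbinom_nat mulr_natr.
by rewrite subnAC bin_sub //; lia.
Qed.

End NaturalDegree.

End CharacteristicFunction.

Unset Implicit Arguments.

Theorem mainTheorem2 (K : numFieldType) (A B : comAlgType K)
    (phi : {linear A -> B}) (N : nat) :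
  connected_alg B ->
  (forall (a : A) (k : nat), (N < k)%N -> psi phi a k = 0) ->
  exists n : nat,
    [/\ (n <= N)%N,
        phi 1 = n%:R,
        (forall (a : A) (k : nat), (n < k)%N -> psi phi a k = 0),
        (forall k : nat, psi phi 1 k = ('C(n, k))%:R) &
        (forall a : A,
           let Q := 1 + \sum_(1 <= k < n.+1) psiW phi (a - 1) k in
           forall j : nat, Q`_j = (if (j <= n)%N then psi phi a (n - j) else 0))].
Proof.
move=> connB psiN.
have [n leq_nN phi1] := phi1_nat connB (psiN 1 N.+1 (ltnSn N)).
have psi_n := psi_vanish_above phi1 psiN.
exists n; split => // [k|a Q j].
- by rewrite psi1 phi1 gbinom_nat.
- exact: psiW_sum_coef.
Qed.
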